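(* Let $\phi\in C^3((0,\infty))$, $\eta=\phi'$ and $\hat\eta(r)=\eta(r)+2\eta(2r)$, and suppose there are constants $0<a_0<\tilde r_1<\tilde r_2<2a_0$ and $a_1>a_0$ such that: $\eta'(r)>0$ for $0<r<\tilde r_1$ and $\eta'(r)<0$ for $r>\tilde r_1$; $\eta''(r)<0$ for $0<r<\tilde r_2$ and $\eta''(r)>0$ for $r>\tilde r_2$; $\hat\eta(r)<0$ for $0<r<a_0$ and $\hat\eta(r)>0$ for $r>a_0$; $\hat\eta'(r)>0$ for $0<r<a_1$ and $\hat\eta'(r)<0$ for $r>a_1$. Let $N,K$ be positive integers with $K<N-1$ and define $\hat{\mathbf\Psi}^F:(0,\infty)^{2N+1}\to\mathbb R^{2N+1}$ by $\hat\psi^F_j(\mathbf r)=\eta(r_j)+2\eta(2r_j)$ for $-N\le j\le -K$ and for $K\le j\le N$, and $\hat\psi^F_j(\mathbf r)=\eta(r_j)+\eta(r_j+r_{j-1})+\eta(r_j+r_{j+1})+[2\eta(2r_K)-\eta(r_K+r_{K-1})-\eta(r_K+r_{K+1})]$ for $-K+1\le j\le K-1$. Suppose $r_L,r_U$ satisfy $\tilde r_2/2<r_L<r_U$ and $\eta'(r_U)+12\eta'(2r_L)\ge 0$. Then $r_U<a_1$, and the Jacobian matrix $D\hat{\mathbf\Psi}^F(\mathbf r)$ is strictly diagonally dominant for all $\mathbf r\in\Omega=(r_L,r_U)^{2N+1}$.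
   Context: A square matrix $(A_{ij})$ is strictly diagonally dominant if $|A_{ii}|>\sum_{j\ne i}|A_{ij}|$ for every row $i$. *)

From HB Require Import structures.
From mathcomp Require Import all_boot all_order all_algebra.
From mathcomp Require Import all_classical all_reals all_analysis.
Set Implicit Arguments. Unset Strict Implicit. Unset Printing Implicit Defensive.
Import Order.TTheory GRing.Theory Num.Theory.
Import numFieldNormedType.Exports.
Local Open Scope ring_scope.

Definition strictly_diag_dominant (R : numDomainType) (n : nat) (A : 'M[R]_n) :=
  forall i : 'I_n, \sum_(j < n | j != i) `|A i j| < `|A i i|.

(* Jacobian in the usual convention: entry (i, k) = d f_i / d x_k.
   (MathComp-Analysis' 'J f p = lin1_mx ('d f p) acts on row vectors, so its
   (k, i) entry is d f_i / d x_k; we transpose it.) *)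
Definition jac (R : numFieldType) (n m : nat) (f : 'rV[R]_n -> 'rV[R]_m)
  (p : 'rV[R]_n) : 'M[R]_(m, n) := ('J f p)^T.

(* Coordinates r_j, j = -N..N, are stored at position q = j + N in a row
   vector of size 2N+1.  [coord r q] reads position q (nat). *)
Definition coord (R : Type) (N : nat) (r : 'rV[R]_(N.*2.+1)) (q : nat) : R :=
  r ord0 (inord q).

Definition PsiF (R : ringType) (eta : R -> R) (N K : nat)
  (r : 'rV[R]_(N.*2.+1)) : 'rV[R]_(N.*2.+1) :=
  \row_(q < N.*2.+1)
    if (q <= N - K)%N || (N + K <= q)%N then
      eta (coord r q) + 2 * eta (2 * coord r q)
    else
      eta (coord r q) + eta (coord r q + coord r q.-1)
        + eta (coord r q + coord r q.+1)
        + (2 * eta (2 * coord r (N + K))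
           - eta (coord r (N + K) + coord r (N + K).-1)
           - eta (coord r (N + K) + coord r (N + K).+1)).

(* Let m = - eta'(2 rL) > 0.  Since eta' increases on (rt2, oo), rt2 < 2 rL, and
   eta' < 0 on (rt1, oo), every value eta'(s) with s >= 2 rL lies in [-m, 0).  The
   hypothesis then reads eta'(rU) >= 12 m > 0, so rU <= rt1 and eta'(r_j) > eta'(rU) on
   the decreasing branch of eta'.  Each row of the Jacobian is eta'(r_i) at the pivot
   plus terms eta'(r_a + r_b) of total weight 2 + 2 + 4 + 2 + 2 = 12, which gives strict
   diagonal dominance.  Finally etahat'(t) = eta'(t) + 4 eta'(2t) >= eta'(t) - 4 m stays
   positive for t slightly right of rU by continuity of eta', so rU < a1. *)

From Pilot Require Import Defs.
From HB Require Import structures.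
From mathcomp Require Import all_boot all_order all_algebra.
From mathcomp Require Import all_classical all_reals all_analysis.
From mathcomp Require Import ring lra.
Import Order.TTheory GRing.Theory Num.Theory.
Import numFieldNormedType.Exports.
(* Otherwise [coord] would denote the coordinates of [vector.v]. *)
Import Defs.
Local Open Scope ring_scope.
Local Open Scope classical_set_scope.

Section StrictMonotone.
Context {R : realType} (f : R -> R) (x y : R).
Hypotheses (xy : x < y) (f_derivable : forall z, x <= z <= y -> derivable f z 1).

Let cf : {within `[x, y], continuous f}.
Proof.
apply/continuous_in_subspaceT => z; rewrite inE /= in_itv /= => zxy.
exact/differentiable_continuous/derivable1_diffP/f_derivable.
Qed.

Let x_in : x \in `[x, y]%R. Proof. by rewrite in_itv /= lexx ltW. Qed.
Let y_in : y \in `[x, y]%R. Proof. by rewrite in_itv /= lexx ltW. Qed.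
Let df_open z : z \in `]x, y[%R -> derivable f z 1.
Proof. by rewrite in_itv /= => /andP[xz zy]; apply: f_derivable; rewrite !ltW. Qed.

Lemma derive1_gt0_ltr : (forall z, x < z < y -> 0 < f^`()%classic z) -> f x < f y.
Proof. by move=> f'_gt0; apply: (gtr0_derive1_lt_cc df_open). Qed.

Lemma derive1_lt0_gtr : (forall z, x < z < y -> f^`()%classic z < 0) -> f y < f x.
Proof. by move=> f'_lt0; apply: (ltr0_derive1_lt_cc df_open). Qed.
End StrictMonotone.

Section EtaDerivative.
Context {R : realType} (D : R -> R) (rt1 rt2 rL rU : R).
Hypothesis D_derivable : forall x, 0 < x -> derivable D x 1.
Hypothesis D'_lt0 : forall x, 0 < x -> x < rt2 -> D^`()%classic x < 0.
Hypothesis D'_gt0 : forall x, rt2 < x -> 0 < D^`()%classic x.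
Hypothesis D_lt0 : forall x, rt1 < x -> D x < 0.
Hypotheses (rt1_gt0 : 0 < rt1) (rt1_lt_rt2 : rt1 < rt2) (rt2_lt_2rL : rt2 < 2 * rL).
Hypothesis rL_lt_rU : rL < rU.
Hypothesis D_rU_ge : 0 <= D rU + 12 * D (2 * rL).

Let rt2_gt0 : 0 < rt2. Proof. exact: lt_trans rt1_gt0 rt1_lt_rt2. Qed.

Lemma D_2rL_lt0 : D (2 * rL) < 0.
Proof. exact/D_lt0/(lt_trans rt1_lt_rt2). Qed.

Lemma normr_D_le s : 2 * rL <= s -> `|D s| <= - D (2 * rL).
Proof.
rewrite le_eqVlt => /predU1P[<-|rLs]; first by rewrite ltr0_norm // D_2rL_lt0.
have rt2_lt_s := lt_trans rt2_lt_2rL rLs.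
rewrite ltr0_norm; last exact/D_lt0/(lt_trans rt1_lt_rt2).
rewrite lerN2 ltW //; apply: derive1_gt0_ltr => // z /andP[z_gt _].
  exact/D_derivable/(lt_trans rt2_gt0)/(lt_le_trans rt2_lt_2rL).
exact/D'_gt0/(lt_trans rt2_lt_2rL).
Qed.

Lemma rU_le_rt1 : rU <= rt1.
Proof. by rewrite leNgt; apply/negP => /D_lt0; move: D_rU_ge D_2rL_lt0; lra. Qed.

Lemma D_rU_lt x : 0 < x -> x < rU -> D rU < D x.
Proof.
move=> x_gt0 x_lt; have rU_lt_rt2 := le_lt_trans rU_le_rt1 rt1_lt_rt2.
apply: derive1_lt0_gtr => // z /andP[z1 z2].
  exact/D_derivable/(lt_le_trans x_gt0).
by apply: D'_lt0; [exact: lt_trans z1 | exact: lt_trans rU_lt_rt2].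
Qed.

(* At [rU] itself only [0 < D rU + 4 * D (2 * rU)] is known; continuity of [D]
   carries this to points right of [rU]. *)
Lemma rU_lt_a1 (a1 : R) :
  (forall x, 0 < x -> a1 < x -> D x + 4 * D (2 * x) < 0) -> rU < a1.
Proof.
move=> hat'_lt0; rewrite ltNge; apply/negP => a1_le_rU.
have rU_gt0 : 0 < rU by move: rt2_gt0 rt2_lt_2rL rL_lt_rU; lra.
have DrU : - 4 * D (2 * rL) < D rU by move: D_rU_ge D_2rL_lt0; lra.
have D_cont : {for rU, continuous D}.
  exact/differentiable_continuous/derivable1_diffP/D_derivable.
have : \forall t \near rU^'+, rU < t /\ - 4 * D (2 * rL) < D t.
  near=> t; split; first by near: t; exact: nbhs_right_gt.
  by near: t; exact: cvgr_gt (cvg_at_right_filter D_cont) _ DrU.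
move=> /filter_ex[t [rU_lt_t Dt]].
have t_gt0 := lt_trans rU_gt0 rU_lt_t.
have /andP[D2t_ge _] : - - D (2 * rL) <= D (2 * t) <= - D (2 * rL).
  by rewrite -ler_norml normr_D_le //; move: rL_lt_rU rU_lt_t; lra.
have := hat'_lt0 t t_gt0 (le_lt_trans a1_le_rU rU_lt_t).
by move: D2t_ge Dt; lra.
Unshelve. all: by end_near. Qed.
End EtaDerivative.

Section Differentials.
Context {R : realType}.

Lemma is_diff_comp_derive1 {V : normedModType R} {g : R -> R} {f df : V -> R} {x} :
  is_diff x f df -> differentiable g (f x) ->
  is_diff x (fun y => g (f y)) (fun v => df v * g^`()%classic (f x)).
Proof.
move=> fx /differentiableP gfx.
by apply: is_diff_eq (is_diff_comp fx gfx) _; rewrite diff1E.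
Qed.

(* [is_diffZ] with the product of [R] in place of the scaling [*:], which [ring]
   does not understand. *)
Lemma is_diff_mull {V : normedModType R} (c : R) {f df : V -> R} {x} :
  is_diff x f df -> is_diff x (fun y => c * f y) (fun v => c * df v).
Proof. exact: is_diffZ. Qed.

Lemma is_diff_coord (N q : nat) (x : 'rV[R]_(N.*2.+1)) :
  is_diff x (fun r => coord r q) (fun v => coord v q).
Proof.
have coord_linear : linear (fun r : 'rV[R]_(N.*2.+1) => coord r q).
  by move=> a u v; rewrite /coord !mxE.
pose L : {linear 'rV[R]_(N.*2.+1) -> R} :=
  HB.pack (fun r : 'rV[R]_(N.*2.+1) => coord r q)
    (GRing.isLinear.Build _ _ _ _ _ coord_linear).
have L_cont : continuous L by exact: coord_continuous.
change (is_diff x L L).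
by apply: DiffDef; [exact: linear_differentiable | exact: diff_lin].
Qed.

Lemma differentiable_rV {V : normedModType R} {m} (f : V -> 'rV[R]_m) x :
  (forall j, differentiable (fun y => f y ord0 j) x) -> differentiable f x.
Proof.
move=> df; have -> : f = \sum_(j < m) (fun y => f y ord0 j *: delta_mx ord0 j).
  by apply/funext => y; rewrite fct_sumE; exact: row_sum_delta.
by apply: differentiable_sum => j; exact: differentiableZl.
Qed.

Lemma jacE {n m} {f : 'rV[R]_n -> 'rV[R]_m} {x i} {df : 'rV[R]_n -> R} :
  differentiable f x -> is_diff x (fun y => f y ord0 i) df ->
  forall k, jac f x i k = df (delta_mx ord0 k).
Proof.
move=> fx dfi k; rewrite /jac /jacobian mxE /lin1_mx mxE -deriveE //.
rewrite derive_mx ?mxE; last exact: diff_derivable.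
by rewrite deriveE // diff_val.
Qed.
End Differentials.

Section CoordComb.
Context {R : realType}.

Definition coord_comb {n} (i : 'I_n) (d : R) (s : seq ('I_n * R)) (v : 'rV[R]_n) :=
  d * v ord0 i + \sum_(t <- s) t.2 * v ord0 t.1.

Lemma sum_norm_sum_delta_le n (s : seq ('I_n * R)) :
  \sum_(k < n) `|\sum_(t <- s) t.2 * (t.1 == k)%:R| <= \sum_(t <- s) `|t.2|.
Proof.
apply: le_trans (ler_sum _ (fun k _ => ler_norm_sum _ _ _)) _.
rewrite exchange_big /=; apply: ler_sum => t _.
under eq_bigr do rewrite normrM normr_nat.
rewrite -mulr_sumr (bigD1 t.1) //= eqxx big1 ?addr0 ?mulr1 // => k.
by rewrite eq_sym => /negbTE ->.
Qed.

(* Only the pivot weight [d] is compared with the total mass of [s], so indices in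
   [s] may repeat or even equal [i]. *)
Lemma diag_dominant_row {n} {A : 'M[R]_n} {i : 'I_n} {d : R} {s : seq ('I_n * R)} :
  (forall k, A i k = coord_comb i d s (delta_mx ord0 k)) ->
  \sum_(t <- s) `|t.2| < d -> \sum_(k < n | k != i) `|A i k| < `|A i i|.
Proof.
move=> AE s_lt_d; set y := fun k => \sum_(t <- s) t.2 * (t.1 == k)%:R.
have {}AE k : A i k = d * (i == k)%:R + y k.
  by rewrite AE /coord_comb /y !mxE; under eq_bigr do rewrite !mxE.
have off : \sum_(k < n | k != i) `|A i k| = \sum_(k < n | k != i) `|y k|.
  by apply: eq_bigr => k ki; rewrite AE eq_sym (negbTE ki) mulr0 add0r.
have diag : d - `|y i| <= `|A i i|.
  rewrite AE eqxx mulr1 (le_trans _ (ler_norm _)) //.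
  by rewrite lerD2l (lerNnormlW (lexx _)).
have := sum_norm_sum_delta_le _ s; rewrite (bigD1 i) //= -/(y i) -off.
by move: s_lt_d diag; lra.
Qed.
End CoordComb.

Section PsiFJacobian.
Context {R : realType}.
Context {eta : R -> R} {N K : nat} {r : 'rV[R]_(N.*2.+1)}.
Hypothesis eta_diff : forall x : R, 0 < x -> differentiable eta x.
Hypothesis r_gt0 : forall q, 0 < coord r q.
Local Notation D := (eta^`()%classic).

Local Ltac is_diff_row := repeat first
  [ apply: is_diffB | apply: is_diffD | apply: is_diff_mull | apply: is_diff_coord
  | apply: is_diff_comp_derive1;
    last by apply: eta_diff; do ?[apply: addr_gt0 | apply: mulr_gt0 | apply: r_gt0] ].

Lemma is_diff_PsiF_outer q :
  is_diff r (fun M => eta (coord M q) + 2 * eta (2 * coord M q))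
    (coord_comb (inord q) (D (coord r q)) [:: (inord q, 4 * D (2 * coord r q))]).
Proof.
apply: is_diff_eq; first by is_diff_row.
by apply/funext => v; rewrite /coord_comb big_seq1 /= !fctE /coord; ring.
Qed.

Lemma is_diff_PsiF_inner q p :
  is_diff r
    (fun M => eta (coord M q) + eta (coord M q + coord M q.-1)
       + eta (coord M q + coord M q.+1)
       + (2 * eta (2 * coord M p) - eta (coord M p + coord M p.-1)
          - eta (coord M p + coord M p.+1)))
    (coord_comb (inord q) (D (coord r q))
      [:: (inord q, D (coord r q + coord r q.-1));
          (inord q.-1, D (coord r q + coord r q.-1));
          (inord q, D (coord r q + coord r q.+1));
          (inord q.+1, D (coord r q + coord r q.+1));
          (inord p, 4 * D (2 * coord r p));
          (inord p, - D (coord r p + coord r p.-1));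
          (inord p.-1, - D (coord r p + coord r p.-1));
          (inord p, - D (coord r p + coord r p.+1));
          (inord p.+1, - D (coord r p + coord r p.+1))]).
Proof.
apply: is_diff_eq; first by is_diff_row.
by apply/funext => v; rewrite /coord_comb !big_cons big_nil /= !fctE /coord; ring.
Qed.

Variable m : R.
Hypothesis D_pair_le : forall p q, `|D (coord r p + coord r q)| <= m.
Hypothesis D_coord_gt : forall q, 12 * m < D (coord r q).

Lemma PsiF_jac_diag_dominant : strictly_diag_dominant (jac (@PsiF R eta N K) r).
Proof.
have m_ge0 : 0 <= m := le_trans (normr_ge0 _) (D_pair_le 0 0).
have D_double_le q : `|D (2 * coord r q)| <= m.
  by rewrite mulr_natl mulr2n; apply: D_pair_le.
have rows (i : 'I_(N.*2.+1)) : exists s,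
    is_diff r (fun M => @PsiF R eta N K M ord0 i) (coord_comb i (D (coord r i)) s)
    /\ \sum_(t <- s) `|t.2| <= 12 * m.
  case: (boolP ((i <= N - K) || (N + K <= i))%N) => hi.
    exists [:: (i, 4 * D (2 * coord r i))]; split.
      have -> : (fun M => @PsiF R eta N K M ord0 i)
          = (fun M => eta (coord M i) + 2 * eta (2 * coord M i)).
        by apply/funext => M; rewrite mxE hi.
      by apply: is_diff_eq (is_diff_PsiF_outer i) _; rewrite inord_val.
    rewrite big_seq1 normrM ger0_norm //.
    by move: (D_double_le i) m_ge0; lra.
  pose c := (N + K)%N.
  exists [:: (i, D (coord r i + coord r i.-1));
      (inord i.-1, D (coord r i + coord r i.-1));
      (i, D (coord r i + coord r i.+1));
      (inord i.+1, D (coord r i + coord r i.+1));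
      (inord c, 4 * D (2 * coord r c));
      (inord c, - D (coord r c + coord r c.-1));
      (inord c.-1, - D (coord r c + coord r c.-1));
      (inord c, - D (coord r c + coord r c.+1));
      (inord c.+1, - D (coord r c + coord r c.+1))].
  split.
    have -> : (fun M => @PsiF R eta N K M ord0 i) = (fun M =>
        eta (coord M i) + eta (coord M i + coord M i.-1) + eta (coord M i + coord M i.+1)
        + (2 * eta (2 * coord M c) - eta (coord M c + coord M c.-1)
           - eta (coord M c + coord M c.+1))).
      by apply/funext => M; rewrite mxE (negbTE hi).
    by apply: is_diff_eq (is_diff_PsiF_inner i c) _; rewrite inord_val.
  rewrite !big_cons big_nil /= !normrN normrM (ger0_norm (ler0n _ 4)).
  move: (D_pair_le i i.-1) (D_pair_le i i.+1) (D_double_le c).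
  move: (D_pair_le c c.-1) (D_pair_le c c.+1); lra.
have PsiF_diff : differentiable (@PsiF R eta N K) r.
  by apply: differentiable_rV => i; have [s [di _]] := rows i; exact: ex_diff.
move=> i; have [s [di s_le]] := rows i.
exact: diag_dominant_row (jacE PsiF_diff di) (le_lt_trans s_le (D_coord_gt i)).
Qed.
End PsiFJacobian.

Lemma derive1_etahat {R : realType} (eta : R -> R) x :
  differentiable eta x -> differentiable eta (2 * x) ->
  (fun t => eta t + 2 * eta (2 * t))^`()%classic x
  = eta^`()%classic x + 4 * eta^`()%classic (2 * x).
Proof.
move=> eta_x eta_2x.
have := is_diffD (is_diff_comp_derive1 (is_diff_id x) eta_x)
  (is_diff_mull 2 (is_diff_comp_derive1 (is_diff_mull 2 (is_diff_id x)) eta_2x)).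
by move=> eta_hat_x; rewrite derive1E' // diff_val /= !fctE; ring.
Qed.

Theorem lemma4p4 (R : realType) (phi : R -> R)
  (a0 rt1 rt2 a1 : R) (N K : nat) (rL rU : R) :
  (* phi in C^3((0,oo)) *)
  (forall x : R, 0 < x ->
     [/\ derivable phi x 1, derivable (derive1 phi) x 1 & derivable (derive1n 2 phi) x 1]) ->
  (forall x : R, 0 < x -> {for x, continuous (derive1n 3 phi)}) ->
  let eta : R -> R := derive1 phi in
  let etahat : R -> R := fun r : R => eta r + 2 * eta (2 * r) in
  0 < a0 -> a0 < rt1 -> rt1 < rt2 -> rt2 < 2 * a0 -> a0 < a1 ->
  (forall r, 0 < r -> r < rt1 -> 0 < derive1 eta r) ->
  (forall r, rt1 < r -> derive1 eta r < 0) ->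
  (forall r, 0 < r -> r < rt2 -> derive1n 2 eta r < 0) ->
  (forall r, rt2 < r -> 0 < derive1n 2 eta r) ->
  (forall r, 0 < r -> r < a0 -> etahat r < 0) ->
  (forall r, a0 < r -> 0 < etahat r) ->
  (forall r, 0 < r -> r < a1 -> 0 < derive1 etahat r) ->
  (forall r, a1 < r -> derive1 etahat r < 0) ->
  (0 < N)%N -> (0 < K)%N -> (K < N - 1)%N ->
  rt2 / 2 < rL -> rL < rU ->
  0 <= derive1 eta rU + 12 * derive1 eta (2 * rL) ->
  rU < a1 /\
  (forall r : 'rV[R]_(N.*2.+1),
     (forall q, rL < r ord0 q < rU) ->
     strictly_diag_dominant (jac (@PsiF R eta N K) r)).
Proof.
move=> phi_C3 _ eta etahat a0_gt0 a0_lt_rt1 rt1_lt_rt2 _ _ _ D_lt0 D'_lt0 D'_gt0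
  _ _ _ hat'_lt0 _ _ _ rt2_lt_2rL rL_lt_rU D_rU_ge.
have rt1_gt0 : 0 < rt1 := lt_trans a0_gt0 a0_lt_rt1.
have {}rt2_lt_2rL : rt2 < 2 * rL by move: rt2_lt_2rL; lra.
have eta_diff (x : R) : 0 < x -> differentiable eta x.
  by move=> /phi_C3[_ /derivable1_diffP].
have D_derivable (x : R) : 0 < x -> derivable eta^`()%classic x 1 by move=> /phi_C3[].
have rL_gt0 : 0 < rL.
  by move: (lt_trans rt1_gt0 rt1_lt_rt2) rt2_lt_2rL; lra.
split.
  apply: (@rU_lt_a1 _ eta^`()%classic rt1 rt2 rL) => // x x_gt0 a1_lt_x.
  rewrite -derive1_etahat; [exact: hat'_lt0 | exact: eta_diff |].
  by apply: eta_diff; rewrite mulr_gt0.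
move=> r r_in; have coord_in q : rL < coord r q < rU := r_in _.
apply: (PsiF_jac_diag_dominant eta_diff _ (- eta^`()%classic (2 * rL))).
- by move=> q; have /andP[+ _] := coord_in q; exact: lt_trans.
- move=> p q; apply: (@normr_D_le _ _ rt1 rt2) => //.
  by have /andP[+ _] := coord_in p; have /andP[+ _] := coord_in q; lra.
- move=> q; have /andP[q_gt q_lt] := coord_in q.
  apply: (@le_lt_trans _ _ (eta^`()%classic rU)); first by move: D_rU_ge; lra.
  by apply: (@D_rU_lt _ _ rt1 rt2 rL) => //; exact: lt_trans q_gt.
Qed.
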